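(* Let $v\in T_1^\circ$ be a term of size $p$. Then for every $\beta\in B_\bullet$, one has $v(1)\cdot\partial\beta = \partial^p\beta\cdot v(1)$ in $B_\bullet$, where $v(1)$ is the evaluation of $v$ at the identity element $1$ of $B_\bullet$ with respect to the operation $\circ$.
   Context: $T_1^\circ$ is the set of terms in a single variable $x$ built with a binary operator $\circ$; the size of a term is its number of variable occurrences. The group $B_\bullet$ is generated by $\sigma_1,\sigma_2,\dots$ and $a_1,a_2,\dots$ subject to: $\sigma_j\sigma_i=\sigma_i\sigma_j$ and $a_j\sigma_i=\sigma_ia_j$ for $j\ge i+2$; $a_j\sigma_i=\sigma_{i+1}a_j$ and $a_ja_i=a_{i+1}a_j$ for $j\le i-1$; $\sigma_j\sigma_i\sigma_j=\sigma_i\sigma_j\sigma_i$, $\sigma_i\sigma_ja_i=a_j\sigma_i$ and $\sigma_j\sigma_ia_j=a_i\sigma_i$ for $j=i+1$. $\partial$ is the endomorphism of $B_\bullet$ with $\partial\sigma_i=\sigma_{i+1}$, $\partial a_i=a_{i+1}$. The operation $\circ$ on $B_\bullet$ is $\beta\circ\gamma=\beta\cdot\partial\gamma\cdot a_1$; thus $x(1)=1$ and $(v_1\circ v_2)(1)=v_1(1)\cdot\partial v_2(1)\cdot a_1$. *)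

(* The group B_bullet is given by generators and relations;
   we realise it as words in the generators and their inverses modulo the
   congruence generated by free cancellation and the defining relations.
   Equality in B_bullet is this congruence [beq].
   Index convention: [Sig i] stands for sigma_{i+1}, [A i] for a_{i+1}. *)
From Stdlib Require Import List Arith.
Import ListNotations.

Inductive gen : Type := Sig (i : nat) | A (i : nat).

(* a letter: a generator together with an exponent sign (true = inverse) *)
Definition letter : Type := (gen * bool)%type.
Definition word : Type := list letter.

Definition g (x : gen) : word := [(x, false)].
Definition linv (l : letter) : letter := (fst l, negb (snd l)).

Inductive rel : word -> word -> Prop :=
| rel_ss_far i j : i + 2 <= j -> rel (g (Sig j) ++ g (Sig i)) (g (Sig i) ++ g (Sig j))
| rel_as_far i j : i + 2 <= j -> rel (g (A j) ++ g (Sig i)) (g (Sig i) ++ g (A j))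
| rel_as_low i j : j + 1 <= i -> rel (g (A j) ++ g (Sig i)) (g (Sig (i + 1)) ++ g (A j))
| rel_aa_low i j : j + 1 <= i -> rel (g (A j) ++ g (A i)) (g (A (i + 1)) ++ g (A j))
| rel_braid i : rel (g (Sig (i + 1)) ++ g (Sig i) ++ g (Sig (i + 1)))
                    (g (Sig i) ++ g (Sig (i + 1)) ++ g (Sig i))
| rel_ssa i : rel (g (Sig i) ++ g (Sig (i + 1)) ++ g (A i)) (g (A (i + 1)) ++ g (Sig i))
| rel_ssa' i : rel (g (Sig (i + 1)) ++ g (Sig i) ++ g (A (i + 1))) (g (A i) ++ g (Sig i)).

Inductive basic : word -> word -> Prop :=
| basic_cancel l : basic [l; linv l] []
| basic_rel u v : rel u v -> basic u v.

Inductive beq : word -> word -> Prop :=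
| beq_step u v w w' : basic w w' -> beq (u ++ w ++ v) (u ++ w' ++ v)
| beq_refl w : beq w w
| beq_sym w w' : beq w w' -> beq w' w
| beq_trans w1 w2 w3 : beq w1 w2 -> beq w2 w3 -> beq w1 w3.

Definition dgen (x : gen) : gen :=
  match x with Sig i => Sig (S i) | A i => A (S i) end.
Definition dpart (w : word) : word := map (fun l => (dgen (fst l), snd l)) w.

Inductive term : Type := X | Op (t1 t2 : term).

Fixpoint tsize (t : term) : nat :=
  match t with X => 1 | Op t1 t2 => tsize t1 + tsize t2 end.

(* evaluation v(1) in B_bullet, with beta o gamma = beta . partial gamma . a_1 *)
Fixpoint eval1 (t : term) : word :=
  match t with
  | X => []
  | Op t1 t2 => eval1 t1 ++ dpart (eval1 t2) ++ g (A 0)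
  end.

(* Relations a_1 sigma_i = sigma_{i+1} a_1 and a_1 a_i = a_{i+1} a_1 (i >= 2)
   say that conjugation by a_1 turns the shift of a generator into its double
   shift, so a_1 . d(beta) = d^2(beta) . a_1 for every beta.  Since d respects
   the defining relations, it is an endomorphism, and the identity follows by
   induction on the term:
   v1(1) . d v2(1) . a_1 . d beta  =  v1(1) . d (v2(1) . d beta) . a_1
                                   =  v1(1) . d (d^p2 beta . v2(1)) . a_1
                                   =  d^p1 (d^p2 beta) . v1(1) . d v2(1) . a_1. *)
From Stdlib Require Import List Arith Lia Setoid Morphisms.
Import ListNotations.

#[export] Instance beq_Equivalence : Equivalence beq.
Proof.
  split; [exact beq_refl | exact beq_sym | exact beq_trans].
Qed.

Lemma beq_in_context u v w w' : beq w w' -> beq (u ++ w ++ v) (u ++ w' ++ v).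
Proof.
  induction 1 as [u0 v0 w0 w0' Hb| | |].
  - replace (u ++ (u0 ++ w0 ++ v0) ++ v) with ((u ++ u0) ++ w0 ++ (v0 ++ v))
      by now rewrite !app_assoc.
    replace (u ++ (u0 ++ w0' ++ v0) ++ v) with ((u ++ u0) ++ w0' ++ (v0 ++ v))
      by now rewrite !app_assoc.
    now apply beq_step.
  - reflexivity.
  - now symmetry.
  - etransitivity; eassumption.
Qed.

#[export] Instance app_beq_Proper : Proper (beq ==> beq ==> beq) (@app letter).
Proof.
  intros u u' Hu v v' Hv.
  transitivity (u' ++ v).
  - exact (beq_in_context [] v u u' Hu).
  - pose proof (beq_in_context u' [] v v' Hv) as H; now rewrite !app_nil_r in H.
Qed.

#[export] Instance cons_beq_Proper l : Proper (beq ==> beq) (cons l).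
Proof. intros v v' Hv; exact (app_beq_Proper [l] [l] (beq_refl _) v v' Hv). Qed.

Lemma basic_beq w w' : basic w w' -> beq w w'.
Proof.
  intro H; pose proof (beq_step [] [] w w' H) as E; now rewrite !app_nil_r in E.
Qed.

Lemma letter_linv l : beq [l; linv l] [].
Proof. apply basic_beq, basic_cancel. Qed.

Lemma linv_letter l : beq [linv l; l] [].
Proof.
  destruct l as [x b].
  rewrite <- (Bool.negb_involutive b) at 2.
  exact (letter_linv (x, negb b)).
Qed.

Lemma beq_conj_linv c x y :
  beq (c ++ [x]) ([y] ++ c) -> beq (c ++ [linv x]) ([linv y] ++ c).
Proof.
  intro Hc.
  transitivity ([linv y; y] ++ c ++ [linv x]).
  { now rewrite linv_letter. }
  transitivity ([linv y] ++ (c ++ [x]) ++ [linv x]).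
  { now rewrite Hc, <- !app_assoc. }
  rewrite <- app_assoc; cbn [app].
  now rewrite letter_linv, app_nil_r.
Qed.

Lemma dpart_app u v : dpart (u ++ v) = dpart u ++ dpart v.
Proof. apply map_app. Qed.

Lemma rel_dpart w w' : rel w w' -> rel (dpart w) (dpart w').
Proof.
  destruct 1 as [i j Hij|i j Hij|i j Hij|i j Hij|i|i|i]; cbn;
    rewrite ?Nat.add_1_r.
  - exact (rel_ss_far (S i) (S j) ltac:(lia)).
  - exact (rel_as_far (S i) (S j) ltac:(lia)).
  - pose proof (rel_as_low (S i) (S j) ltac:(lia)) as R; now rewrite Nat.add_1_r in R.
  - pose proof (rel_aa_low (S i) (S j) ltac:(lia)) as R; now rewrite Nat.add_1_r in R.
  - pose proof (rel_braid (S i)) as R; now rewrite Nat.add_1_r in R.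
  - pose proof (rel_ssa (S i)) as R; now rewrite Nat.add_1_r in R.
  - pose proof (rel_ssa' (S i)) as R; now rewrite Nat.add_1_r in R.
Qed.

Lemma basic_dpart w w' : basic w w' -> basic (dpart w) (dpart w').
Proof.
  destruct 1 as [[x b]|u v R].
  - exact (basic_cancel (dgen x, b)).
  - now apply basic_rel, rel_dpart.
Qed.

#[export] Instance dpart_beq_Proper : Proper (beq ==> beq) dpart.
Proof.
  induction 1.
  - rewrite !dpart_app; now apply beq_step, basic_dpart.
  - reflexivity.
  - now symmetry.
  - etransitivity; eassumption.
Qed.

Lemma a1_dgen x :
  beq (g (A 0) ++ [(dgen x, false)]) ([(dgen (dgen x), false)] ++ g (A 0)).
Proof.
  apply basic_beq, basic_rel; destruct x as [i|i]; cbn.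
  - pose proof (rel_as_low (S i) 0 ltac:(lia)) as R; now rewrite Nat.add_1_r in R.
  - pose proof (rel_aa_low (S i) 0 ltac:(lia)) as R; now rewrite Nat.add_1_r in R.
Qed.

Lemma a1_dpart beta : beq (g (A 0) ++ dpart beta) (dpart (dpart beta) ++ g (A 0)).
Proof.
  induction beta as [|[x b] beta IH]; cbn [dpart map fst snd].
  - now rewrite app_nil_r.
  - assert (Hx : beq (g (A 0) ++ [(dgen x, b)]) ([(dgen (dgen x), b)] ++ g (A 0))).
    { destruct b; [exact (beq_conj_linv _ _ _ (a1_dgen x)) | exact (a1_dgen x)]. }
    change (beq ((g (A 0) ++ [(dgen x, b)]) ++ dpart beta)
                ([(dgen (dgen x), b)] ++ dpart (dpart beta) ++ g (A 0))).
    now rewrite Hx, <- app_assoc, IH.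
Qed.

Theorem lemma2p7 (v : term) (p : nat) (Hp : tsize v = p) (beta : word) :
  beq (eval1 v ++ dpart beta) (Nat.iter p dpart beta ++ eval1 v).
Proof.
  subst p; revert beta.
  induction v as [|v1 IH1 v2 IH2]; intro beta; cbn [eval1 tsize].
  - now rewrite app_nil_r.
  - rewrite Nat.iter_add, <- !app_assoc, a1_dpart.
    rewrite (app_assoc (dpart (eval1 v2))), <- dpart_app, IH2, dpart_app.
    now rewrite !app_assoc, IH1.
Qed.
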